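(* Let $(M,g)$ be a $d$-dimensional Lorentzian manifold with $d>4$, let $p\in M$, and let $\{\ell,n,m^3,\dots,m^d\}$ be a null frame at $p$. Suppose the Weyl tensor $C$ at $p$ is invariant under the subgroup of the Lorentz group at $p$ that fixes $\ell$ and $n$ and acts as $SO(d-2)$, in its standard representation, on $\mathrm{span}\{m^3,\dots,m^d\}$. Then, in this null frame, the Weyl tensor is of type D(bcd): all components of nonzero boost weight vanish, and $\bar S_{ij}=0$, $\bar C_{ijkl}=0$ and $A_{ij}=0$. Consequently the Weyl tensor at $p$ has only one independent component, namely $\bar R$.
   Context: Null frame convention: the metric is $g=2\,\ell\, n+\delta_{ij}m^im^j$, i.e. $g(\ell,n)=1$, $g(m^i,m^j)=\delta_{ij}$, all other products zero. Frame indices: $0$ refers to $\ell$, $1$ to $n$, and $i,j,k,l\in\{3,\dots,d\}$ to the $m^i$; set $n=d-2$ (number of spatial directions). $C_{abcd}$ are the frame components of the Weyl tensor. The boost weight of a component $C_{abcd}$ is (number of indices equal to $0$) minus (number of indices equal to $1$). Define $\bar R_{ij}=\sum_k C_{kikj}$, $\bar R=\sum_i \bar R_{ii}$, $\bar S_{ij}=\bar R_{ij}-\frac1{n}\bar R\,\delta_{ij}$ (trace-free part), $\bar C_{ijkl}$ = the Weyl (totally trace-free) part of the algebraic curvature tensor $C_{ijkl}$ on $\mathbb R^{n}$ with Euclidean metric $\delta_{ij}$, and $A_{ij}=C_{01ij}$. *)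

(* Frame components of an algebraic (Weyl) tensor at a point
   of a Lorentzian manifold of dimension d = n + 2, in a null frame
   {l, n, m^3, ..., m^d}. *)
From HB Require Import structures.
From mathcomp Require Import all_boot all_order all_algebra.
From mathcomp Require Import reals.
Set Implicit Arguments. Unset Strict Implicit. Unset Printing Implicit Defensive.
Import Order.TTheory GRing.Theory Num.Theory.
Local Open Scope ring_scope.

(* frame indices: 'I_(2+n); index 0 = l, index 1 = n, index 2+i = m^(3+i) *)
Definition fidx (n : nat) := 'I_(2 + n).
Definition fl {n : nat} : fidx n := lshift n (0 : 'I_2).
Definition fn {n : nat} : fidx n := lshift n (1 : 'I_2).
Definition fm {n : nat} (i : 'I_n) : fidx n := rshift 2 i.

Definition tensor4 (R : Type) (n : nat) := fidx n -> fidx n -> fidx n -> fidx n -> R.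

(* the metric in the null frame: g(l,n) = 1, g(m^i,m^j) = delta_ij, others 0.
   It is its own inverse. *)
Definition g2 {R : realType} : 'M[R]_2 := \matrix_(i, j) (if i != j then 1 else 0).
Definition gframe {R : realType} (n : nat) : 'M[R]_(2 + n) := block_mx g2 0 0 1%:M.

(* algebraic Weyl tensor: curvature symmetries, first Bianchi identity and
   total trace-freeness (contraction with the inverse metric g^{bd} = g_{bd}) *)
Definition is_weyl {R : realType} (n : nat) (C : tensor4 R n) : Prop :=
  [/\ (forall a b c d, C a b c d = - C b a c d),
      (forall a b c d, C a b c d = - C a b d c),
      (forall a b c d, C a b c d = C c d a b),
      (forall a b c d, C a b c d + C a c d b + C a d b c = 0)
    & (forall a c, \sum_(b : fidx n) \sum_(d : fidx n) gframe n b d * C a b c d = 0)].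

Definition is_SO {R : realType} (n : nat) (O : 'M[R]_n) : Prop :=
  O *m O^T = 1%:M /\ \det O = 1.

Definition lorentz_of {R : realType} (n : nat) (O : 'M[R]_n) : 'M[R]_(2 + n) :=
  block_mx 1%:M 0 0 O.

Definition transform {R : realType} (n : nat) (L : 'M[R]_(2 + n)) (C : tensor4 R n)
  : tensor4 R n :=
  fun a b c d => \sum_(e : fidx n) \sum_(f : fidx n) \sum_(g : fidx n) \sum_(h : fidx n)
    L a e * L b f * L c g * L d h * C e f g h.

Definition SO_invariant {R : realType} (n : nat) (C : tensor4 R n) : Prop :=
  forall O : 'M[R]_n, is_SO O -> transform (lorentz_of O) C = C.

Definition bw {n : nat} (a : fidx n) : int :=
  (a == fl)%:Z - (a == fn)%:Z.
Definition boost_weight {n : nat} (a b c d : fidx n) : int := bw a + bw b + bw c + bw d.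

Section Components.
Context {R : realType} {n : nat} (C : tensor4 R n).
Definition Cs (i j k l : 'I_n) : R := C (fm i) (fm j) (fm k) (fm l).
Definition Rbar_ij (i j : 'I_n) : R := \sum_(k < n) Cs k i k j.
Definition Rbar : R := \sum_(i < n) Rbar_ij i i.
Definition Sbar (i j : 'I_n) : R := Rbar_ij i j - Rbar / n%:R * (i == j)%:R.
(* Weyl part of the algebraic curvature tensor C_ijkl on R^n (Euclidean) *)
Definition Cbar (i j k l : 'I_n) : R :=
  Cs i j k l
  - ((i == k)%:R * Rbar_ij j l - (i == l)%:R * Rbar_ij j k
     - (j == k)%:R * Rbar_ij i l + (j == l)%:R * Rbar_ij i k) / (n%:R - 2)
  + Rbar * ((i == k)%:R * (j == l)%:R - (i == l)%:R * (j == k)%:R)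
      / ((n%:R - 1) * (n%:R - 2)).
Definition Aij (i j : 'I_n) : R := C fl fn (fm i) (fm j).
End Components.

From HB Require Import structures.
From mathcomp Require Import all_boot all_order all_algebra.
From mathcomp Require Import reals.
From mathcomp Require Import perm ring lra.
From Stdlib Require Import FunctionalExtensionality.
Set Implicit Arguments. Unset Strict Implicit. Unset Printing Implicit Defensive.
Import Order.TTheory GRing.Theory Num.Theory.
Local Open Scope ring_scope.

(* Only the signed permutation matrices diag(d) P_p with det = 1 are needed
   from SO(n).  The rotation by pi in the (i,k)-plane kills every component
   in which the indices i and k occur an odd number of times in total, and
   since n > 2 such a plane can be chosen for every component outside the
   pattern below.  Permutations make all C_ijij with i != j equal to one
   constant beta, and the Bianchi identity kills C_xjkl for distinct j, k, l.
   Hence C_ijkl = beta (d_ik d_jl - d_il d_jk), and the trace-freeness of C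
   then gives C_linj = alpha d_ij and C_lnln = n alpha with
   alpha = -(n-1) beta / 2, all other components vanishing.  So C is beta
   times a fixed tensor of boost weight 0, and every claim follows. *)

Section SignedPermutations.
Variables (R : realType) (n : nat).
Implicit Types (a b c e x : fidx n) (i j : 'I_n).

Lemma fidx_ind (P : fidx n -> Prop) :
  (forall j : 'I_2, P (lshift n j)) -> (forall i, P (rshift 2 i)) -> forall a, P a.
Proof. by move=> hl hr a; rewrite -(splitK a); case: (split a). Qed.

Variant fidx_spec a : Prop :=
  | FidxL of a = fl | FidxN of a = fn | FidxM i of a = fm i.

Lemma fidxP a : fidx_spec a.
Proof.
elim/fidx_ind: a => [[[|[|//]] ?]|i]; last exact: (FidxM (i := i)).
- by apply: FidxL; apply/val_inj.
- by apply: FidxN; apply/val_inj.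
Qed.

Lemma eqLN : (@fl n == fn) = false. Proof. by []. Qed.
Lemma eqNL : (@fn n == fl) = false. Proof. by []. Qed.
Lemma eqLM i : (fl == fm i) = false. Proof. by []. Qed.
Lemma eqML i : (fm i == fl) = false. Proof. by []. Qed.
Lemma eqNM i : (fn == fm i) = false. Proof. by []. Qed.
Lemma eqMN i : (fm i == fn) = false. Proof. by []. Qed.
Lemma eqMM i j : (fm i == fm j) = (i == j).
Proof. exact: (inj_eq (@rshift_inj _ _)). Qed.

Lemma eq_lshift_rshift (j : 'I_2) i : (lshift n j == rshift 2 i) = false.
Proof.
apply/negbTE/eqP => /(congr1 val) /=; case: j => j lt_j2 /= ji.
by move: lt_j2; rewrite ji.
Qed.

Lemma sum_fidx1 (G : fidx n -> R) y : (forall x, x != y -> G x = 0) ->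
  \sum_x G x = G y.
Proof. by move=> G0; rewrite (bigD1 y) //= big1 ?addr0 // => x /G0. Qed.

Definition frame_sign (d : 'I_n -> R) a : R :=
  if split a is inr i then d i else 1.
Definition frame_perm (p : 'S_n) a : fidx n :=
  if split a is inr i then rshift 2 (p i) else a.

Lemma frame_signL d (j : 'I_2) : frame_sign d (lshift n j) = 1.
Proof. by rewrite /frame_sign -[lshift _ _]/(unsplit (inl _)) unsplitK. Qed.
Lemma frame_signR d i : frame_sign d (rshift 2 i) = d i.
Proof. by rewrite /frame_sign -[rshift _ _]/(unsplit (inr _)) unsplitK. Qed.
Lemma frame_permL p (j : 'I_2) : frame_perm p (lshift n j) = lshift n j.
Proof. by rewrite /frame_perm -[lshift _ _]/(unsplit (inl _)) unsplitK. Qed.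
Lemma frame_permR p i : frame_perm p (rshift 2 i) = rshift 2 (p i).
Proof. by rewrite /frame_perm -[rshift _ _]/(unsplit (inr _)) unsplitK. Qed.

Lemma frame_sign_fl d : frame_sign d fl = 1. Proof. exact: frame_signL. Qed.
Lemma frame_sign_fn d : frame_sign d fn = 1. Proof. exact: frame_signL. Qed.
Lemma frame_sign_fm d i : frame_sign d (fm i) = d i. Proof. exact: frame_signR. Qed.
Lemma frame_perm_fl p : frame_perm p fl = fl. Proof. exact: frame_permL. Qed.
Lemma frame_perm_fn p : frame_perm p fn = fn. Proof. exact: frame_permL. Qed.
Lemma frame_perm_fm p i : frame_perm p (fm i) = fm (p i). Proof. exact: frame_permR. Qed.

Lemma frame_perm1 a : frame_perm 1 a = a.
Proof. by elim/fidx_ind: a => [j|i]; rewrite ?frame_permL ?frame_permR ?perm1. Qed.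

Definition signed_perm_mx (d : 'I_n -> R) (p : 'S_n) : 'M[R]_n :=
  diag_mx (\row_i d i) *m perm_mx p.

Lemma signed_perm_mxE d p i j : signed_perm_mx d p i j = d i * (p i == j)%:R.
Proof. by rewrite /signed_perm_mx mul_diag_mx !mxE. Qed.

Lemma lorentz_signed_permE d p a x :
  lorentz_of (signed_perm_mx d p) a x = frame_sign d a * (x == frame_perm p a)%:R.
Proof.
elim/fidx_ind: a => [j|i]; elim/fidx_ind: x => [j'|i'].
- rewrite block_mxEul frame_signL frame_permL mul1r mxE eq_sym.
  by rewrite (inj_eq (@lshift_inj _ _)).
- by rewrite block_mxEur frame_signL frame_permL mxE eq_sym eq_lshift_rshift mulr0.
- by rewrite block_mxEdl frame_signR frame_permR mxE eq_lshift_rshift mulr0.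
- rewrite block_mxEdr frame_signR frame_permR signed_perm_mxE eq_sym.
  by rewrite (inj_eq (@rshift_inj _ _)).
Qed.

Lemma signed_perm_mx_SO d p :
  (forall i, d i * d i = 1) -> \prod_i d i * (-1) ^+ odd_perm p = 1 ->
  is_SO (signed_perm_mx d p).
Proof.
move=> d_sq det1; split.
  rewrite /signed_perm_mx trmx_mul tr_perm_mx tr_diag_mx mulmxA.
  rewrite -(mulmxA (diag_mx _)) -perm_mxM mulgV perm_mx1 mulmx1 mulmx_diag.
  by rewrite -diag_const_mx; congr diag_mx; apply/matrixP => x y; rewrite !mxE d_sq.
rewrite det_mulmx det_diag det_perm -[RHS]det1; congr (_ * _).
by apply: eq_bigr => i _; rewrite mxE.
Qed.

Lemma transform_monomial (L : 'M[R]_(2 + n)) (s : fidx n -> R) (pi : fidx n -> fidx n)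
    (C : tensor4 R n) a b c e :
  (forall a x, L a x = s a * (x == pi a)%:R) ->
  transform L C a b c e = s a * s b * s c * s e * C (pi a) (pi b) (pi c) (pi e).
Proof.
move=> LE; rewrite /transform.
have off x y : x != pi y -> L y x = 0 by move=> /negbTE xy; rewrite LE xy mulr0.
rewrite (@sum_fidx1 _ (pi a)); last first.
  move=> x /off Lx; rewrite big1 // => f _; rewrite big1 // => g _.
  by rewrite big1 // => h _; rewrite Lx !mul0r.
rewrite (@sum_fidx1 _ (pi b)); last first.
  move=> x /off Lx; rewrite big1 // => g _; rewrite big1 // => h _.
  by rewrite Lx !(mulr0, mul0r).
rewrite (@sum_fidx1 _ (pi c)); last first.
  by move=> x /off Lx; rewrite big1 // => h _; rewrite Lx !(mulr0, mul0r).
rewrite (@sum_fidx1 _ (pi e)); last by move=> x /off Lx; rewrite Lx !(mulr0, mul0r).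
by rewrite !LE !eqxx !mulr1.
Qed.

Lemma SO_invariant_signed_perm (C : tensor4 R n) d p :
  SO_invariant C -> (forall i, d i * d i = 1) ->
  \prod_i d i * (-1) ^+ odd_perm p = 1 ->
  forall a b c e, C a b c e =
    frame_sign d a * frame_sign d b * frame_sign d c * frame_sign d e *
    C (frame_perm p a) (frame_perm p b) (frame_perm p c) (frame_perm p e).
Proof.
move=> Cinv d_sq det1 a b c e.
rewrite -{1}(Cinv _ (signed_perm_mx_SO d_sq det1)).
exact/transform_monomial/lorentz_signed_permE.
Qed.

End SignedPermutations.

Section ModelTensor.
Variables (R : realType) (n : nat).
Implicit Types (a b c e : fidx n) (i : 'I_n) (X Y : fidx n -> fidx n -> R).

(* Half of the Kulkarni-Nomizu product X o Y. *)
Definition kn (X Y : fidx n -> fidx n -> R) a b c e : R := X a c * Y b e - X a e * Y b c.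

(* q is the metric of span{m^i} and h that of span{l, n}. *)
Definition spatial a : bool := (a != fl) && (a != fn).
Definition q a b : R := ((a == b) && spatial a)%:R.
Definition h a b : R := (((a == fl) && (b == fn)) || ((a == fn) && (b == fl)))%:R.

Definition model (t : R) a b c e : R :=
  let s := - (n%:R - 1) * t / 2 in
  t * kn q q a b c e + s * (kn h q a b c e + kn q h a b c e) - n%:R * s * kn h h a b c e.

Lemma qC a b : q a b = q b a.
Proof. by rewrite /q; have [->|] := eqVneq a b. Qed.
Lemma hC a b : h a b = h b a.
Proof. by rewrite /h orbC (andbC (a == fn)) (andbC (a == fl)). Qed.

Lemma model_skew_l (t : R) a b c e : model t a b c e = - model t b a c e.
Proof. by rewrite /model /kn; ring. Qed.
Lemma model_skew_r (t : R) a b c e : model t a b c e = - model t a b e c.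
Proof. by rewrite /model /kn; ring. Qed.
Lemma model_swap (t : R) a b c e : model t a b c e = model t c e a b.
Proof.
rewrite /model /kn (qC c a) (qC e b) (qC c b) (qC e a).
by rewrite (hC c a) (hC e b) (hC c b) (hC e a); ring.
Qed.

Definition bw_neutral X := forall a c, X a c != 0 -> bw a + bw c = 0.

Lemma bwL : bw (@fl n) = 1. Proof. by rewrite /bw eqxx eqLN. Qed.
Lemma bwN : bw (@fn n) = -1. Proof. by rewrite /bw eqxx eqNL. Qed.
Lemma bwM i : bw (fm i) = 0. Proof. by rewrite /bw eqML eqMN. Qed.

Lemma q_bw_neutral : bw_neutral q.
Proof.
move=> a c; rewrite /q /spatial.
case: (fidxP a) => [->|->|i ->]; case: (fidxP c) => [->|->|k ->];
  by rewrite ?eqxx ?eqLN ?eqNL ?eqLM ?eqML ?eqNM ?eqMN //= ?bwM ?addr0.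
Qed.

Lemma h_bw_neutral : bw_neutral h.
Proof.
move=> a c; rewrite /h.
case: (fidxP a) => [->|->|i ->]; case: (fidxP c) => [->|->|k ->];
  by rewrite ?eqxx ?eqLN ?eqNL ?eqLM ?eqML ?eqNM ?eqMN //= ?bwL ?bwN.
Qed.

Lemma mul_bw_neutral X Y a b c e : bw_neutral X -> bw_neutral Y ->
  (bw a + bw c) + (bw b + bw e) != 0 -> X a c * Y b e = 0.
Proof.
move=> Xbw Ybw; have [-> //|/Xbw ->] := eqVneq (X a c) 0; first by rewrite mul0r.
by have [-> //|/Ybw ->] := eqVneq (Y b e) 0; rewrite ?mulr0 ?addr0.
Qed.

Lemma kn_bw_neutral X Y a b c e : bw_neutral X -> bw_neutral Y ->
  boost_weight a b c e != 0 -> kn X Y a b c e = 0.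
Proof.
move=> Xbw Ybw; rewrite /boost_weight /kn => bw_neq0.
rewrite !(mul_bw_neutral Xbw Ybw) ?subrr //.
all: by apply: contra_neq bw_neq0 => <-; ring.
Qed.

Lemma model_bw (t : R) a b c e : boost_weight a b c e != 0 -> model t a b c e = 0.
Proof.
move=> bw_neq0; have knE X Y := @kn_bw_neutral X Y a b c e.
rewrite /model !knE //; try exact: q_bw_neutral; try exact: h_bw_neutral.
by rewrite !(mulr0, addr0, subr0).
Qed.

End ModelTensor.

Ltac model_simp := rewrite /model /kn /q /h /spatial
  ?eqxx ?eqLN ?eqNL ?eqLM ?eqML ?eqNM ?eqMN ?eqMM /= ?andbT.

Section InvariantWeylTensor.
Variables (R : realType) (n : nat) (n_gt2 : (2 < n)%N) (C : tensor4 R n).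
Hypotheses (C_weyl : is_weyl C) (C_inv : SO_invariant C).
Implicit Types (a b c e x y : fidx n) (i j k l : 'I_n) (p : 'S_n).

Lemma C_skew_l a b c e : C a b c e = - C b a c e. Proof. by case: C_weyl. Qed.
Lemma C_skew_r a b c e : C a b c e = - C a b e c. Proof. by case: C_weyl. Qed.
Lemma C_swap a b c e : C a b c e = C c e a b. Proof. by case: C_weyl. Qed.
Lemma C_bianchi a b c e : C a b c e + C a c e b + C a e b c = 0.
Proof. by case: C_weyl. Qed.

Lemma C_rep_l a c e : C a a c e = 0. Proof. have := C_skew_l a a c e; lra. Qed.
Lemma C_rep_r a b c : C a b c c = 0. Proof. have := C_skew_r a b c c; lra. Qed.

Definition i0 : 'I_n := Ordinal (ltnW (ltnW n_gt2)).
Definition i1 : 'I_n := Ordinal (ltnW n_gt2).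
Definition i2 : 'I_n := Ordinal n_gt2.

Lemma exists_neq2 i j : exists k, (k != i) && (k != j).
Proof.
have [|] := boolP ((i0 != i) && (i0 != j)); first by exists i0.
have [|] := boolP ((i1 != i) && (i1 != j)); first by exists i1.
move=> i1ij i0ij; exists i2; move: i1ij i0ij.
rewrite !negb_and !negbK -!val_eqE /=.
by case: i => [[|[|[|?]]] ?]; case: j => [[|[|[|?]]] ?].
Qed.

Definition rot_pi i k (x : 'I_n) : R := if (x == i) || (x == k) then -1 else 1.

Lemma C_rot_pi_odd i k a b c e : i != k ->
  frame_sign (rot_pi i k) a * frame_sign (rot_pi i k) b *
  frame_sign (rot_pi i k) c * frame_sign (rot_pi i k) e = -1 ->
  C a b c e = 0.
Proof.
move=> ik sign_odd.
have rot_sq (z : 'I_n) : rot_pi i k z * rot_pi i k z = 1.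
  by rewrite /rot_pi; case: ifP; rewrite ?mulrNN mulr1.
have rot_det : \prod_(z < n) rot_pi i k z * (-1) ^+ odd_perm (1 : 'S_n) = 1.
  rewrite odd_perm1 expr0 mulr1 (bigD1 i) //= (bigD1 k) /=; last by rewrite eq_sym.
  rewrite big1 /rot_pi ?eqxx ?orbT /=; first by rewrite mulr1 mulrNN mulr1.
  by move=> z /andP[/negbTE -> /negbTE ->].
have := SO_invariant_signed_perm C_inv rot_sq rot_det a b c e.
rewrite !frame_perm1 sign_odd mulN1r => CE.
by clear -CE; lra.
Qed.

(* An odd permutation is corrected into a rotation by reflecting i0. *)
Definition perm_sign p (x : 'I_n) : R := if odd_perm p && (x == i0) then -1 else 1.

Lemma perm_sign_sq p (z : 'I_n) : perm_sign p z * perm_sign p z = 1.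
Proof. by rewrite /perm_sign; case: ifP; rewrite ?mulrNN mulr1. Qed.

Lemma perm_sign_det p : \prod_(z < n) perm_sign p z * (-1) ^+ odd_perm p = 1.
Proof.
have [p_odd|p_even] := boolP (odd_perm p); last first.
  by rewrite big1 ?mul1r ?expr0 // => z _; rewrite /perm_sign (negbTE p_even).
rewrite (bigD1 i0) // big1 /perm_sign ?p_odd ?eqxx /=; last by move=> z /negbTE ->.
by rewrite mulr1 expr1 mulrNN mulr1.
Qed.

Lemma C_perm p a b c e : C a b c e =
  frame_sign (perm_sign p) a * frame_sign (perm_sign p) b *
  frame_sign (perm_sign p) c * frame_sign (perm_sign p) e *
  C (frame_perm p a) (frame_perm p b) (frame_perm p c) (frame_perm p e).
Proof. exact: (SO_invariant_signed_perm C_inv (@perm_sign_sq p) (perm_sign_det p)). Qed.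

(* The 3-cycle j -> l -> k -> j is even, so C x j k l = C x l j k = C x k l j
   and the Bianchi identity gives 3 C x j k l = 0. *)
Lemma C_distinct3 x j k l : j != k -> k != l -> j != l ->
  frame_perm (tperm j k * tperm k l)%g x = x -> C x (fm j) (fm k) (fm l) = 0.
Proof.
move=> jk kl jl px.
set p := (tperm j k * tperm k l)%g.
have p_even : odd_perm p = false by rewrite odd_permM !odd_tperm jk kl.
have pj : p j = l by rewrite permM tpermL tpermL.
have pk : p k = j by rewrite permM tpermR tpermD // eq_sym.
have pl : p l = k by rewrite permM (tpermD jl kl) tpermR.
have := C_perm p x (fm j) (fm k) (fm l); have := C_perm p x (fm l) (fm j) (fm k).
rewrite !frame_perm_fm px pj pk pl !frame_sign_fm /perm_sign p_even /=.
have -> : frame_sign (fun=> (1 : R)) x = 1 by rewrite /frame_sign; case: split.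
have := C_bianchi x (fm j) (fm k) (fm l); rewrite !mul1r; lra.
Qed.

Definition frame_dual a : fidx n :=
  if a == fl then fn else if a == fn then fl else a.

Lemma gframeE a y : gframe (R := R) n a y = (y == frame_dual a)%:R.
Proof.
rewrite /frame_dual.
case: (fidxP a) => [->|->|i ->]; case: (fidxP y) => [->|->|k ->];
  rewrite ?eqxx ?eqLN ?eqNL ?eqLM ?eqML ?eqNM ?eqMN ?eqMM /gframe;
  by rewrite ?block_mxEul ?block_mxEur ?block_mxEdl ?block_mxEdr !mxE // eq_sym.
Qed.

Lemma C_trace a c : C a fl c fn + C a fn c fl + \sum_k C a (fm k) c (fm k) = 0.
Proof.
case: C_weyl => _ _ _ _ /(_ a c).
have dual_sum b : \sum_d gframe n b d * C a b c d = C a b c (frame_dual b).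
  rewrite (@sum_fidx1 _ _ _ (frame_dual b)) => [|d /negbTE db].
    by rewrite gframeE eqxx mul1r.
  by rewrite gframeE db mul0r.
rewrite (eq_bigr _ (fun b _ => dual_sum b)) big_split_ord /= big_ord_recl big_ord1.
have -> : lshift n (ord0 : 'I_2) = fl by apply/val_inj.
have -> : lshift n (lift ord0 (ord0 : 'I_1)) = fn by apply/val_inj.
by rewrite /frame_dual !eqxx eqNL.
Qed.

Ltac simp_neq := repeat match goal with
  | h : is_true (?x != ?y) |- context [?x == ?y] => rewrite (negbTE h)
  | h : is_true (?x != ?y) |- context [?y == ?x] => rewrite [y == x]eq_sym (negbTE h)
  end.
Ltac rot_sign :=
  rewrite ?frame_sign_fm ?frame_sign_fl ?frame_sign_fn /rot_pi ?eqxx ?orbT;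
  simp_neq; rewrite /=; ring.

Definition beta := C (fm i0) (fm i1) (fm i0) (fm i1).

Lemma C_ijij i j : i != j -> C (fm i) (fm j) (fm i) (fm j) = beta.
Proof.
move=> ij.
set j' := tperm i i0 j.
have j'_neq : j' != i0.
  by rewrite /j' -{2}(tpermL i i0) (inj_eq (@perm_inj _ _)) eq_sym.
set p := (tperm i i0 * tperm j' i1)%g.
have pi : p i = i0 by rewrite permM tpermL tpermD // eq_sym.
have pj : p j = i1 by rewrite permM tpermL.
rewrite (C_perm p) !frame_sign_fm !frame_perm_fm pi pj.
rewrite [X in X * _](_ : _ = (perm_sign p i * perm_sign p i) *
  (perm_sign p j * perm_sign p j)); last by ring.
by rewrite !perm_sign_sq !mul1r.
Qed.

Lemma C_spatial i j k l : C (fm i) (fm j) (fm k) (fm l) =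
  beta * ((i == k)%:R * (j == l)%:R - (i == l)%:R * (j == k)%:R).
Proof.
have [<-|ij] := eqVneq i j; first by rewrite C_rep_l; ring.
have [<-|kl] := eqVneq k l; first by rewrite C_rep_r; ring.
have ji : j != i by rewrite eq_sym.
case: (eqVneq i k) kl => [<-|ik] kl; case: (eqVneq j l) kl => [<-|jl] kl.
- by rewrite C_ijij //; simp_neq; rewrite /=; ring.
- by rewrite (@C_rot_pi_odd i j) //; [simp_neq; rewrite /=; ring | rot_sign].
- by rewrite (@C_rot_pi_odd j i) //; [simp_neq; rewrite /=; ring | rot_sign].
case: (eqVneq i l) ik jl => [<-|il] ik jl; case: (eqVneq j k) ik jl => [<-|jk] ik jl.
- by rewrite C_skew_r C_ijij //; simp_neq; rewrite /=; ring.
- by rewrite (@C_rot_pi_odd i j) //; [simp_neq; rewrite /=; ring | rot_sign].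
- by rewrite (@C_rot_pi_odd j i) //; [simp_neq; rewrite /=; ring | rot_sign].
rewrite C_distinct3 //; first by simp_neq; rewrite /=; ring.
by rewrite frame_perm_fm permM !tpermD // eq_sym.
Qed.

Definition alpha := - (n%:R - 1) * beta / 2.

Lemma sum_delta i (r : R) : \sum_(k < n) r * (i == k)%:R = r.
Proof.
rewrite (bigD1 i) //= big1 ?eqxx ?addr0 ?mulr1 // => k ki.
by rewrite eq_sym (negbTE ki) mulr0.
Qed.

Lemma sum_const (r : R) : \sum_(k < n) r = r * n%:R.
Proof. by rewrite sumr_const card_ord mulr_natr. Qed.

Lemma C_linj i j : C fl (fm i) fn (fm j) = alpha * (i == j)%:R.
Proof.
have [<-|ij] := eqVneq i j; last first.
  have [k /andP[ki kj]] := exists_neq2 i j.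
  rewrite mulr0 (@C_rot_pi_odd i k) //; first by rewrite eq_sym.
  by rot_sign.
have := C_trace (fm i) (fm i).
rewrite (eq_bigr (fun k => beta - beta * (i == k)%:R)) => [|k _]; last first.
  by rewrite C_spatial !eqxx [k == i]eq_sym; case: (i == k) => /=; ring.
rewrite sumrB sum_const sum_delta [C (fm i) fl _ _]C_skew_l [C fl (fm i) _ _]C_skew_r.
rewrite [C (fm i) fn _ _]C_swap [C (fm i) fl _ _]C_skew_l [C fl (fm i) _ _]C_skew_r.
rewrite mulr1 /alpha => trace0.
apply: (@mulIf _ 2); first by rewrite pnatr_eq0.
rewrite mulrAC -mulrA divff ?pnatr_eq0 // mulr1; lra.
Qed.

Lemma C_lnln : C fl fn fl fn = n%:R * alpha.
Proof.
have := C_trace fl fn; rewrite C_rep_r.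
rewrite (eq_bigr (fun _ => alpha)) => [|k _]; last by rewrite C_linj eqxx mulr1.
rewrite sum_const [C fl fn fn fl]C_skew_r; lra.
Qed.

Lemma C_lnxi x i : (x = fl \/ x = fn) -> C fl fn x (fm i) = 0.
Proof.
move=> x_ln; have [k /andP[ki _]] := exists_neq2 i i.
rewrite (@C_rot_pi_odd i k) //; first by rewrite eq_sym.
by case: x_ln => ->; rot_sign.
Qed.

Lemma C_lnij i j : C fl fn (fm i) (fm j) = 0.
Proof.
have [<-|ij] := eqVneq i j; first by rewrite C_rep_r.
have [k /andP[ki kj]] := exists_neq2 i j.
rewrite (@C_rot_pi_odd i k) //; first by rewrite eq_sym.
by rot_sign.
Qed.

Lemma C_xixj x i j : (x = fl \/ x = fn) -> C x (fm i) x (fm j) = 0.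
Proof.
move=> x_ln.
have sign1 d : frame_sign d x = 1 by case: x_ln => ->; rewrite ?frame_sign_fl ?frame_sign_fn.
have perm1 p : frame_perm p x = x by case: x_ln => ->; rewrite ?frame_perm_fl ?frame_perm_fn.
have [<-|ij] := eqVneq i j; last first.
  have [k /andP[ki kj]] := exists_neq2 i j.
  rewrite (@C_rot_pi_odd i k) //; first by rewrite eq_sym.
  by rewrite !sign1; rot_sign.
have C_xkxk k : C x (fm k) x (fm k) = C x (fm i0) x (fm i0).
  rewrite (C_perm (tperm k i0)) !sign1 !perm1 !frame_sign_fm !frame_perm_fm tpermL.
  by rewrite mul1r mulr1 perm_sign_sq mul1r.
have := C_trace x x; rewrite (eq_bigr _ (fun k _ => C_xkxk k)) sum_const C_xkxk.
have -> : C x fl x fn + C x fn x fl = 0.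
  by case: x_ln => ->; rewrite C_rep_l C_rep_r addr0.
rewrite add0r => /eqP; rewrite mulf_eq0 pnatr_eq0 eqn0Ngt (ltnW (ltnW n_gt2)) orbF.
by move/eqP.
Qed.

Lemma C_xijk x i j k : (x = fl \/ x = fn) -> C x (fm i) (fm j) (fm k) = 0.
Proof.
move=> x_ln.
have sign1 d : frame_sign d x = 1 by case: x_ln => ->; rewrite ?frame_sign_fl ?frame_sign_fn.
have [<-|jk] := eqVneq j k; first by rewrite C_rep_r.
case: (eqVneq i j) jk => [<-|ij] jk.
  by rewrite (@C_rot_pi_odd k i) 1?eq_sym // sign1; rot_sign.
case: (eqVneq i k) jk => [<-|ik] jk.
  by rewrite (@C_rot_pi_odd j i) 1?eq_sym // sign1; rot_sign.
apply: C_distinct3 => //.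
by case: x_ln => ->; rewrite ?frame_perm_fl ?frame_perm_fn.
Qed.

Definition fits_model a b c e := C a b c e = model beta a b c e.

Lemma fits_model_skew_l a b c e : fits_model b a c e -> fits_model a b c e.
Proof. by rewrite /fits_model => C_model; rewrite C_skew_l C_model -model_skew_l. Qed.
Lemma fits_model_skew_r a b c e : fits_model a b e c -> fits_model a b c e.
Proof. by rewrite /fits_model => C_model; rewrite C_skew_r C_model -model_skew_r. Qed.
Lemma fits_model_swap a b c e : fits_model c e a b -> fits_model a b c e.
Proof. by rewrite /fits_model => C_model; rewrite C_swap C_model -model_swap. Qed.

Lemma fits_model_rep_l a c e : fits_model a a c e.
Proof. by rewrite /fits_model C_rep_l /model /kn; ring. Qed.
Lemma fits_model_rep_r a b c : fits_model a b c c.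
Proof. by rewrite /fits_model C_rep_r /model /kn; ring. Qed.
Lemma fits_model_lnln : fits_model fl fn fl fn.
Proof. by rewrite /fits_model C_lnln; model_simp; rewrite /alpha; ring. Qed.
Lemma fits_model_lnli i : fits_model fl fn fl (fm i).
Proof. by rewrite /fits_model C_lnxi; [model_simp; ring | left]. Qed.
Lemma fits_model_lnni i : fits_model fl fn fn (fm i).
Proof. by rewrite /fits_model C_lnxi; [model_simp; ring | right]. Qed.
Lemma fits_model_lnij i j : fits_model fl fn (fm i) (fm j).
Proof. by rewrite /fits_model C_lnij; model_simp; ring. Qed.
Lemma fits_model_lilj i j : fits_model fl (fm i) fl (fm j).
Proof. by rewrite /fits_model C_xixj; [model_simp; ring | left]. Qed.
Lemma fits_model_linj i j : fits_model fl (fm i) fn (fm j).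
Proof. by rewrite /fits_model C_linj; model_simp; rewrite /alpha; ring. Qed.
Lemma fits_model_lijk i j k : fits_model fl (fm i) (fm j) (fm k).
Proof. by rewrite /fits_model C_xijk; [model_simp; ring | left]. Qed.
Lemma fits_model_ninj i j : fits_model fn (fm i) fn (fm j).
Proof. by rewrite /fits_model C_xixj; [model_simp; ring | right]. Qed.
Lemma fits_model_nijk i j k : fits_model fn (fm i) (fm j) (fm k).
Proof. by rewrite /fits_model C_xijk; [model_simp; ring | right]. Qed.
Lemma fits_model_ijkl i j k l : fits_model (fm i) (fm j) (fm k) (fm l).
Proof. by rewrite /fits_model C_spatial; model_simp; ring. Qed.

Ltac fits_model_base := first
  [ apply: fits_model_rep_l | apply: fits_model_rep_r | apply: fits_model_lnln
  | apply: fits_model_lnli | apply: fits_model_lnni | apply: fits_model_lnij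
  | apply: fits_model_lilj | apply: fits_model_linj | apply: fits_model_lijk
  | apply: fits_model_ninj | apply: fits_model_nijk | apply: fits_model_ijkl ].
Ltac fits_model_sym := first
  [ fits_model_base
  | apply: fits_model_skew_l; fits_model_base
  | apply: fits_model_skew_r; fits_model_base
  | apply: fits_model_skew_l; apply: fits_model_skew_r; fits_model_base ].

Lemma C_modelE a b c e : C a b c e = model beta a b c e.
Proof.
case: (fidxP a) => [->|->|i ->]; case: (fidxP b) => [->|->|j ->];
case: (fidxP c) => [->|->|k ->]; case: (fidxP e) => [->|->|l ->];
  first [fits_model_sym | apply: fits_model_swap; fits_model_sym].
Qed.

Lemma Aij_eq0 i j : Aij C i j = 0.
Proof. by rewrite /Aij C_modelE; model_simp; ring. Qed.

Lemma n_neq0 : (n%:R : R) != 0.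
Proof. by rewrite pnatr_eq0 gtn_eqF // (ltnW (ltnW n_gt2)). Qed.
Lemma n_sub1_neq0 : (n%:R - 1 : R) != 0.
Proof. by rewrite subr_eq0 -[1]/(1%:R) eqr_nat gtn_eqF // (ltnW n_gt2). Qed.
Lemma n_sub2_neq0 : (n%:R - 2 : R) != 0.
Proof. by rewrite subr_eq0 eqr_nat gtn_eqF. Qed.

Lemma Rbar_ijE i j : Rbar_ij C i j = beta * (n%:R - 1) * (i == j)%:R.
Proof.
rewrite /Rbar_ij /Cs (eq_bigr (fun k => beta * (i == j)%:R - beta * (i == j)%:R * (i == k)%:R)).
  by rewrite sumrB sum_const sum_delta; ring.
move=> k _; rewrite C_spatial eqxx.
by have [<-|ik] := eqVneq i k; rewrite 1?eq_sym /=; ring.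
Qed.

Lemma RbarE : Rbar C = beta * (n%:R - 1) * n%:R.
Proof.
rewrite /Rbar (eq_bigr (fun _ => beta * (n%:R - 1))) ?sum_const // => i _.
by rewrite Rbar_ijE eqxx mulr1.
Qed.

Lemma Sbar_eq0 i j : Sbar C i j = 0.
Proof. by rewrite /Sbar Rbar_ijE RbarE; field; exact: n_neq0. Qed.

Lemma Cbar_eq0 i j k l : Cbar C i j k l = 0.
Proof.
rewrite /Cbar /Cs C_spatial !Rbar_ijE RbarE.
by field; rewrite n_sub1_neq0 n_sub2_neq0.
Qed.

End InvariantWeylTensor.

Theorem mainTheorem1 (R : realType) (n : nat) (hn : (2 < n)%N)
  (C : tensor4 R n) (hW : is_weyl C) (hinv : SO_invariant C) :
  [/\ (forall a b c d : fidx n, boost_weight a b c d != 0 -> C a b c d = 0),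
      (forall i j : 'I_n, Sbar C i j = 0),
      (forall i j k l : 'I_n, Cbar C i j k l = 0),
      (forall i j : 'I_n, Aij C i j = 0)
    & (forall C' : tensor4 R n, is_weyl C' -> SO_invariant C' ->
         Rbar C' = Rbar C -> C' = C)].
Proof.
have CE := C_modelE hn hW hinv.
split.
- by move=> a b c d bw_neq0; rewrite CE model_bw.
- exact: Sbar_eq0.
- exact: Cbar_eq0.
- exact: Aij_eq0.
move=> C' hW' hinv' RbarC'.
have beta' : beta hn C' = beta hn C.
  move: RbarC'; rewrite (RbarE hn hW' hinv') (RbarE hn hW hinv).
  by move=> /(mulIf (n_neq0 R hn)) /(mulIf (n_sub1_neq0 R hn)).
apply: functional_extensionality => a; apply: functional_extensionality => b.
apply: functional_extensionality => c; apply: functional_extensionality => d.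
by rewrite CE (C_modelE hn hW' hinv') beta'.
Qed.
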